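(* Let $k\in\mathbb Z_{\ge1}$ and $a\in\mathbb R_{>0}$. If $a\notin\mathbb J_k:=\{\tfrac{i}{j+1}:i\in\mathbb Z_{\ge1},\ j\in\mathbb Z_{\ge0},\ i+j=k\}=\{\tfrac k1,\tfrac{k-1}{2},\dots,\tfrac1k\}$, then $\Gamma^{a-\delta}_k=\Gamma^{a+\delta}_k$ for all sufficiently small $\delta>0$.
   Context: For $b>0$, $\Gamma^b=(\Gamma^b_0,\Gamma^b_1,\dots)$ is the unit-step lattice path in $\mathbb Z_{\ge0}^2$ which starts at $(0,0)$, lies on or above the line $L_b$ through $(0,-1)$ and $(b,0)$, and steps right (adds $(1,0)$) whenever possible and otherwise steps up (adds $(0,1)$). *)

From Stdlib Require Import Reals Lra Lia.
Open Scope R_scope.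

(* The line L_b through (0,-1) and (b,0) is y = x/b - 1.
   A lattice point (x,y) lies on or above L_b iff  INR x / b - 1 <= INR y. *)
Definition on_or_above (b : R) (p : nat * nat) : Prop :=
  INR (fst p) / b - 1 <= INR (snd p).

Fixpoint Gamma (b : R) (k : nat) : nat * nat :=
  match k with
  | O => (0%nat, 0%nat)
  | S k' =>
      let p := Gamma b k' in
      if Rle_dec (INR (S (fst p)) / b - 1) (INR (snd p))
      then (S (fst p), snd p)
      else (fst p, S (snd p))
  end.

Definition inJ (k : nat) (a : R) : Prop :=
  exists i j : nat, (1 <= i)%nat /\ (i + j = k)%nat /\ a = INR i / INR (j + 1).

From Stdlib Require Import Reals Lra Lia Arith.
Open Scope R_scope.

(* Γ^b_k = (x, k - x), where a lattice point (i, j) with i >= 1 and i + j = k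
   satisfies i <= x exactly when i/(j+1) <= b.  Hence Γ^b_k only depends on
   which elements of J_k lie below b, and this does not change as b moves
   through a small window around a point a outside the finite set J_k. *)

Definition splits_at (b : R) (k x : nat) : Prop :=
  forall i j : nat, (1 <= i)%nat -> (i + j = k)%nat ->
    ((i <= x)%nat <-> INR i <= b * INR (j + 1)).

Lemma div_sub_one_le_iff (b u v : R) :
  0 < b -> (u / b - 1 <= v <-> u <= b * (v + 1)).
Proof.
  intros Hb.
  assert (Hu : u = b * (u / b)) by (field; lra).
  split; intros H.
  - rewrite Hu. apply Rmult_le_compat_l; lra.
  - enough (u / b <= v + 1) by lra.
    apply (Rmult_le_reg_l b); [lra | rewrite <- Hu; lra].
Qed.

Lemma le_mul_iff_div_le (u b c : R) : 0 < c -> (u <= b * c <-> u / c <= b).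
Proof.
  intros Hc. unfold Rdiv. split; intros H.
  - apply (Rmult_le_reg_r c); [exact Hc |].
    rewrite Rmult_assoc, Rinv_l by lra. lra.
  - replace u with (u * / c * c) by (field; lra).
    apply Rmult_le_compat_r; lra.
Qed.

Lemma splits_at_S (b : R) (k x y x' : nat) :
  0 < b -> (x + y = k)%nat -> splits_at b k x -> (x <= x' <= S x)%nat ->
  (x' = S x <-> INR (S x) <= b * (INR y + 1)) ->
  splits_at b (S k) x'.
Proof.
  intros Hb Hxy Hx Hx' Hstep i j Hi Hij.
  destruct (lt_eq_lt_dec i (S x)) as [[Hlt | ->] | Hgt].
  - destruct j as [| j]; [lia |].
    split; intros _; [| lia].
    apply Rle_trans with (b * INR (j + 1)).
    + apply (Hx i j Hi); lia.
    + apply Rmult_le_compat_l; [lra | apply le_INR; lia].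
  - replace j with y by lia. rewrite plus_INR, INR_1.
    split; intros H.
    + apply Hstep; lia.
    + apply Hstep in H; lia.
  - split; intros H; [lia | exfalso].
    destruct i as [| i]; [lia |].
    enough (i <= x)%nat by lia.
    apply (Hx i j); [lia | lia |].
    apply Rle_trans with (INR (S i)); [apply le_INR; lia | exact H].
Qed.

Lemma Gamma_sum (b : R) (k : nat) : (fst (Gamma b k) + snd (Gamma b k) = k)%nat.
Proof.
  induction k as [| k IH]; cbn [Gamma]; [reflexivity |].
  destruct (Rle_dec _ _); cbn [fst snd]; lia.
Qed.

Lemma Gamma_splits_at (b : R) (k : nat) : 0 < b -> splits_at b k (fst (Gamma b k)).
Proof.
  intros Hb. induction k as [| k IH].
  - intros i j Hi Hij; lia.
  - pose proof (Gamma_sum b k) as Hsum.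
    cbn [Gamma]. destruct (Gamma b k) as [x y]; cbn [fst snd] in *.
    destruct (Rle_dec _ _) as [Hc | Hc]; cbn [fst];
      rewrite div_sub_one_le_iff in Hc by exact Hb;
      apply (splits_at_S b k x y); try assumption; try lia.
    + split; [intros _; exact Hc | reflexivity].
    + split; [lia | intro H; contradiction].
Qed.

Lemma splits_at_unique (b : R) (k x x' : nat) :
  (x <= k)%nat -> (x' <= k)%nat -> splits_at b k x -> splits_at b k x' -> x = x'.
Proof.
  intros Hx Hx' Hs Hs'.
  destruct (lt_eq_lt_dec x x') as [[Hlt | Heq] | Hgt]; [exfalso | exact Heq | exfalso].
  - assert (H := proj1 (Hs' x' (k - x')%nat ltac:(lia) ltac:(lia)) (le_n _)).
    apply Hs in H; lia.
  - assert (H := proj1 (Hs x (k - x)%nat ltac:(lia) ltac:(lia)) (le_n _)).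
    apply Hs' in H; lia.
Qed.

Lemma Gamma_eq_of_same_splits (b b' : R) (k : nat) : 0 < b -> 0 < b' ->
  (forall i j : nat, (1 <= i)%nat -> (i + j = k)%nat ->
     (INR i <= b * INR (j + 1) <-> INR i <= b' * INR (j + 1))) ->
  Gamma b k = Gamma b' k.
Proof.
  intros Hb Hb' Hsame.
  pose proof (Gamma_sum b k). pose proof (Gamma_sum b' k).
  assert (Hfst : fst (Gamma b k) = fst (Gamma b' k)).
  { apply (splits_at_unique b' k); try lia.
    - intros i j Hi Hij. rewrite <- Hsame by assumption.
      exact (Gamma_splits_at b k Hb i j Hi Hij).
    - exact (Gamma_splits_at b' k Hb'). }
  destruct (Gamma b k), (Gamma b' k); cbn [fst snd] in *.
  f_equal; lia.
Qed.

Lemma le_shift_stable (r a d : R) :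
  0 < d < Rabs (a - r) -> (r <= a - d <-> r <= a + d).
Proof.
  intros Hd. destruct (Rle_dec r a).
  - rewrite Rabs_right in Hd by lra. lra.
  - rewrite Rabs_left in Hd by lra. lra.
Qed.

Lemma ex_small_forall_le (P : nat -> R -> Prop) (n : nat) :
  (forall i, (i <= n)%nat -> exists e, 0 < e /\ forall d, 0 < d < e -> P i d) ->
  exists e, 0 < e /\ forall i, (i <= n)%nat -> forall d, 0 < d < e -> P i d.
Proof.
  induction n as [| n IH]; intros H.
  - destruct (H 0%nat (le_n 0)) as [e [He HP]].
    exists e; split; [exact He |].
    intros i Hi. replace i with 0%nat by lia. exact HP.
  - destruct IH as [e1 [He1 HP1]]; [intros i Hi; apply H; lia |].
    destruct (H (S n) (le_n _)) as [e2 [He2 HP2]].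
    exists (Rmin e1 e2). split; [apply Rmin_case; assumption |].
    intros i Hi d Hd.
    pose proof (Rmin_l e1 e2). pose proof (Rmin_r e1 e2).
    destruct (Nat.eq_dec i (S n)) as [-> | Hne].
    + apply HP2; lra.
    + apply HP1; [lia | lra].
Qed.

Lemma splits_stable_off_J (k : nat) (a : R) : ~ inJ k a ->
  exists e, 0 < e /\ forall d, 0 < d < e ->
    forall i j : nat, (1 <= i)%nat -> (i + j = k)%nat ->
      (INR i <= (a - d) * INR (j + 1) <-> INR i <= (a + d) * INR (j + 1)).
Proof.
  intros HJ.
  destruct (ex_small_forall_le (fun i d => (1 <= i)%nat ->
      (INR i <= (a - d) * INR (k - i + 1) <-> INR i <= (a + d) * INR (k - i + 1))) k)
    as [e [He HP]].
  - intros i Hik.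
    destruct (Nat.eq_dec i 0) as [-> | Hi].
    { exists 1; split; [lra | intros d _ H; lia]. }
    set (c := INR (k - i + 1)).
    assert (Hc : 0 < c) by (apply lt_0_INR; lia).
    assert (Hne : a <> INR i / c).
    { intro E. apply HJ. exists i, (k - i)%nat. repeat split; [lia | lia | exact E]. }
    exists (Rabs (a - INR i / c)). split; [apply Rabs_pos_lt; lra |].
    intros d Hd _.
    rewrite !(le_mul_iff_div_le _ _ _ Hc).
    exact (le_shift_stable _ _ _ Hd).
  - exists e. split; [exact He |].
    intros d Hd i j Hi Hij.
    replace j with (k - i)%nat by lia.
    apply HP; [lia | exact Hd | exact Hi].
Qed.

Theorem mainTheorem16 (k : nat) (a : R) :
  (1 <= k)%nat -> 0 < a -> ~ inJ k a ->
  exists d0 : R, 0 < d0 /\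
    forall d : R, 0 < d < d0 -> Gamma (a - d) k = Gamma (a + d) k.
Proof.
  intros _ Ha HJ.
  destruct (splits_stable_off_J k a HJ) as [e [He Hstable]].
  exists (Rmin a e). split; [apply Rmin_case; assumption |].
  intros d Hd.
  pose proof (Rmin_l a e). pose proof (Rmin_r a e).
  apply Gamma_eq_of_same_splits; [lra | lra |].
  apply Hstable; lra.
Qed.
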